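(* Let $G$ be a connected graph with minimum degree at least three. Suppose $G$ contains two distinct vertices $v,v'$ joined by exactly two parallel edges $a,b$, such that each of $v,v'$ has degree exactly $3$, its third edge going to a vertex outside $\{v,v'\}$. (Such $v$ is called a $\beta$-vertex.) If $G-v$ is connected, then $\gamma_M(G-v)=\gamma_M(G)-1$; that is, $v$ is a 1-critical-vertex of $G$.
   Context: Graphs may have multiple edges. $\gamma_M(H)$ is the maximum genus of a connected graph $H$ (largest $k$ such that $H$ embeds cellularly in the orientable surface of genus $k$). A vertex $v$ of $G$ is a 1-critical-vertex if $G-v$ is connected and $\gamma_M(G-v)=\gamma_M(G)-1$. *)

From HB Require Import structures.
From mathcomp Require Import all_boot all_order all_fingroup.
Set Implicit Arguments. Unset Strict Implicit. Unset Printing Implicit Defensive.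

(* A finite multigraph (multiple edges and loops allowed) is given by a
   finite vertex type V, a finite edge type E and an endpoint map
   ends : E -> V * V. *)
Section MultiGraph.
Variables (V E : finType) (ends : E -> V * V).

Definition dart := (E * bool)%type.

Definition dvert (d : dart) : V :=
  if d.2 then (ends d.1).2 else (ends d.1).1.

Definition drev (d : dart) : dart := (d.1, ~~ d.2).

Lemma drev_inj : injective drev.
Proof. by case=> e b [e' b'] [-> /negbRL]; rewrite negbK => ->. Qed.

Definition drev_perm : {perm dart} := perm drev_inj.

(* degree = number of darts at x (a loop counts twice) *)
Definition degree (x : V) : nat := #|[set d : dart | dvert d == x]|.

Definition adjacent (x y : V) : bool :=
  [exists e, (ends e == (x, y)) || (ends e == (y, x))].

Definition connected_graph : Prop := forall x y : V, connect adjacent x y.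

Definition edge_between (e : E) (x y : V) : bool :=
  (ends e == (x, y)) || (ends e == (y, x)).

Definition is_rotation (s : {perm dart}) : bool :=
  [forall d, dvert (s d) == dvert d] &&
  [forall d, forall d', (dvert d == dvert d') ==> (d' \in porbit s d)].

(* Faces of the cellular embedding determined by s: orbits of the face
   permutation (composition of s with the dart reversal).  The edgeless
   (one-vertex) graph has one face. *)
Definition nfaces (s : {perm dart}) : nat :=
  #|porbits (drev_perm * s)| + (#|{: dart}| == 0%N).

(* Euler's formula V - E + F = 2 - 2g for the orientable embedding. *)
Definition emb_genus (s : {perm dart}) : nat :=
  ((#|E| + 2) - (#|V| + nfaces s))./2.

Definition max_genus : nat := \max_(s : {perm dart} | is_rotation s) emb_genus s.

End MultiGraph.

Section Deletion.
Variables (V E : finType) (ends : E -> V * V) (v : V).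

Definition del_V := {x : V | x != v}.
Definition del_E := {e : E | ((ends e).1 != v) && ((ends e).2 != v)}.

Definition del_ends (e : del_E) : del_V * del_V :=
  let P := valP e in
  (exist _ (ends (val e)).1 (proj1 (andP P)),
   exist _ (ends (val e)).2 (proj2 (andP P))).

End Deletion.
Arguments del_ends {V E} ends v e.

From mathcomp Require Import all_boot all_order all_fingroup zify.
Set Implicit Arguments. Unset Strict Implicit. Unset Printing Implicit Defensive.

(* The genus of a rotation [s] is read off Euler's formula from its number of
   faces, the orbits of [drev * s]; Euler's inequality [F + V <= E + 2] for the
   connected graph [G - v], obtained by swapping the darts of a spanning tree one
   edge at a time, makes the truncated subtraction exact.  Deleting the
   beta-vertex [v] removes one vertex and the three edges [a], [b], [c].  A
   rotation of [G - v] lifts to [G] by arranging the darts of [a], [b], [c] in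
   coherent 3-cycles at [v] and [v'] and inserting [c] after some dart at [u];
   the new face permutation is six transpositions times the old one, each joining
   a fixed point to a cycle, so the number of faces is unchanged and the genus
   goes up by exactly one.  Conversely, cutting these darts out of any rotation
   of [G] yields a rotation of [G - v] with at most as many faces, so the genus
   goes down by at most one. *)

Section PermOrbits.
Variable T : finType.
Implicit Types (s t : {perm T}) (A : {set T}) (x y z w : T).

Lemma porbit_sub_stable s A z :
  z \in A -> (forall w, w \in A -> s w \in A) -> porbit s z \subset A.
Proof.
move=> zA sA; apply/subsetP=> w /porbitP [i ->].
elim: i => [|i IH]; first by rewrite expg0 perm1.
by rewrite expgSr permM; apply: sA.
Qed.

Lemma porbit_next s z : s z \in porbit s z.
Proof. by have := mem_porbit s 1 z; rewrite expg1. Qed.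

Lemma porbit_trans s x y z :
  y \in porbit s x -> z \in porbit s y -> z \in porbit s x.
Proof. by rewrite -eq_porbit_mem => /eqP ->. Qed.

Lemma porbit_fixed s x y : s x = x -> y \in porbit s x -> y = x.
Proof.
move=> sx; have: porbit s x \subset [set x].
  by apply: porbit_sub_stable; rewrite ?inE // => w /set1P ->; rewrite sx inE.
by move/subsetP=> H /H /set1P.
Qed.

Lemma porbit_subset s t z :
  (forall w, s w \in porbit t w) -> porbit s z \subset porbit t z.
Proof.
move=> st; apply: porbit_sub_stable; first exact: porbit_id.
by move=> w wz; apply: porbit_trans wz _; apply: st.
Qed.

Lemma fconnect_porbit s x y : fconnect s x y -> y \in porbit s x.
Proof.
case/connectP => q; elim: q x => [|z q IH] x /=; first by move=> _ ->; exact: porbit_id.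
by case/andP => /eqP <- pq ey; exact: porbit_trans (porbit_next s x) (IH _ pq ey).
Qed.

Lemma card_porbits_tperm_le s x y : #|porbits (tperm x y * s)| <= #|porbits s|.+1.
Proof. by have := porbits_mul_tperm s x y; case: (_ \notin _); case: (_ != _) => /=; lia. Qed.

Lemma card_porbits_tperm_ge s x y : #|porbits s| <= #|porbits (tperm x y * s)|.+1.
Proof. by have := card_porbits_tperm_le (tperm x y * s) x y; rewrite tpermKg. Qed.

Lemma card_porbits_tperm_join s x y :
  x \notin porbit s y -> #|porbits (tperm x y * s)|.+1 = #|porbits s|.
Proof.
move=> xy; have nxy : x != y by apply: contraNneq xy => ->; exact: porbit_id.
by have := porbits_mul_tperm s x y; rewrite /= xy nxy /=; lia.
Qed.

Lemma card_porbits_tperm_fixed s x y :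
  s x = x -> x != y -> #|porbits (tperm x y * s)|.+1 = #|porbits s|.
Proof.
move=> sx nxy; apply: card_porbits_tperm_join; rewrite porbit_sym.
by apply/negP => /(porbit_fixed sx) /eqP; rewrite eq_sym (negbTE nxy).
Qed.

(* Composing with [tperm x y] splices the fixed point [x] into the cycle of [y]. *)
Lemma porbit_tperm_insert s x y z w :
  s x = x -> w \in porbit s z -> w \in porbit (tperm x y * s) z.
Proof.
move=> sx; apply/subsetP; apply: porbit_subset => u.
have -> : s u = (tperm x y * s)%g (tperm x y u) by rewrite permM tpermK.
case: (tpermP x y u) => [->|->|_ _]; last exact: porbit_next.
- by rewrite permM tpermR sx porbit_id.
- have syx : (tperm x y * s)%g y = x by rewrite permM tpermR sx.
  by apply: porbit_trans (porbit_next _ y) _; rewrite syx porbit_next.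
Qed.

(* When [s y = x], composing with [tperm x y] cuts [x] out of its cycle. *)
Lemma porbit_tperm_cut s x y z w : s y = x -> z != x -> w != x ->
  w \in porbit s z -> w \in porbit (tperm x y * s) z.
Proof.
move=> syx nzx nwx; have [<-|nxy] := eqVneq x y; first by rewrite tperm1 mul1g.
set s' := (tperm x y * s)%g.
have s'x : s' x = x by rewrite permM tpermL syx.
have sE u : s u = s' (tperm x y u) by rewrite permM tpermK.
have xz : x \notin porbit s' z.
  by apply/negP; rewrite porbit_sym => /(porbit_fixed s'x) /eqP; rewrite (negbTE nzx).
have [yz|yz] := boolP (y \in porbit s' z).
  have: porbit s z \subset x |: porbit s' z.
    apply: porbit_sub_stable; first by rewrite !inE porbit_id orbT.
    move=> u; rewrite sE; case: (tpermP x y u) => [->|->|_ _].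
    - by rewrite !inE (porbit_trans yz (porbit_next _ _)) orbT.
    - by rewrite s'x !inE eqxx.
    - case/setU1P=> [->|uz]; first by rewrite s'x !inE eqxx.
      by rewrite !inE (porbit_trans uz (porbit_next _ _)) orbT.
  by move/subsetP=> H /H; rewrite !inE (negbTE nwx).
have: porbit s z \subset porbit s' z.
  apply: porbit_sub_stable; first exact: porbit_id.
  move=> u uz; rewrite sE; case: (tpermP x y u) => [ux|uy|_ _].
  - by rewrite -ux uz in xz.
  - by rewrite -uy uz in yz.
  - exact: porbit_trans uz (porbit_next _ _).
by move/subsetP; apply.
Qed.

Lemma porbit_same s x y z : y \in porbit s x -> z \in porbit s x -> z \in porbit s y.
Proof. by rewrite porbit_sym; apply: porbit_trans. Qed.

Lemma porbit_3cycle s x y z : s x = y -> s y = z ->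
  {in [:: x; y; z], forall w, w \in porbit s x}.
Proof.
move=> sx sy w; rewrite !inE => /or3P[]/eqP->; first exact: porbit_id.
  by rewrite -sx porbit_next.
by rewrite -sy; apply: porbit_trans (porbit_next _ _); rewrite -sx porbit_next.
Qed.

Lemma perm_3cycle s x y z : uniq [:: x; y; z] ->
  s x \in [:: x; y; z] -> s y \in [:: x; y; z] -> s z \in [:: x; y; z] ->
  s x != x -> s y != y -> s z != z ->
  (s x = y /\ s y = z /\ s z = x) \/ (s x = z /\ s z = y /\ s y = x).
Proof.
rewrite /= !inE !negb_or !andbT => /andP[/andP[nxy nxz] nyz] + + + nx ny nz.
case/or3P => /eqP ex; case/or3P => /eqP ey; case/or3P => /eqP ez;
first [ by left | by right
      | by rewrite ex eqxx in nx | by rewrite ey eqxx in ny | by rewrite ez eqxx in nz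
      | by have e := perm_inj (etrans ex (esym ey)); rewrite e eqxx in nxy
      | by have e := perm_inj (etrans ex (esym ez)); rewrite e eqxx in nxz
      | by have e := perm_inj (etrans ey (esym ez)); rewrite e eqxx in nyz ].
Qed.

End PermOrbits.

Section RotationSystems.
Variables (V E : finType) (ends : E -> V * V).
Local Notation dv := (dvert ends).
Local Notation T := (dart E).
Implicit Types (s : {perm T}) (e : E) (x : V) (z : T).

Lemma is_rotationP s : is_rotation ends s ->
  (forall d, dv (s d) = dv d) /\ (forall d d', dv d = dv d' -> d' \in porbit s d).
Proof.
case/andP=> /forallP H1 /forallP H2; split=> [d|d d' e]; first exact/eqP.
by have /forallP/(_ d') := H2 d; rewrite e eqxx.
Qed.

Lemma porbit_rotation s z : is_rotation ends s -> porbit s z = [set w | dv w == dv z].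
Proof.
case/is_rotationP=> sdv sorb; apply/setP=> w; apply/idP/idP; last first.
  by rewrite inE => /eqP e; apply: sorb.
have: porbit s z \subset [set w | dv w == dv z].
  by apply: porbit_sub_stable; rewrite ?inE // => u; rewrite !inE sdv.
by move/subsetP; apply.
Qed.

Lemma card_porbits_rotation s : is_rotation ends s -> #|porbits s| <= #|V|.
Proof.
move=> rs; have -> : porbits s = (fun x => [set w | dv w == x]) @: (dv @: [set: T]).
  apply/setP=> X; apply/imsetP/imsetP=> [[z _ ->]|[x /imsetP[z _ ->] ->]].
    by exists (dv z); rewrite ?imset_f // porbit_rotation.
  by exists z; rewrite // porbit_rotation.
by apply: leq_trans (leq_imset_card _ _) _; apply: max_card.
Qed.

Definition next_at z : T := next (enum [set w | dv w == dv z]) z.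

Lemma dvert_next_at z : dv (next_at z) = dv z.
Proof.
by have := mem_next (enum [set w | dv w == dv z]) z; rewrite !mem_enum !inE eqxx => /eqP.
Qed.

Lemma next_at_inj : injective next_at.
Proof.
move=> z z' e; have ed : dv z = dv z' by rewrite -dvert_next_at e dvert_next_at.
by move: e; rewrite /next_at ed => /(can_inj (prev_next (enum_uniq _))).
Qed.

(* Ordering the darts at each vertex as they are enumerated gives a rotation. *)
Lemma rotation_exists : exists s, is_rotation ends s.
Proof.
exists (perm next_at_inj); apply/andP; split; apply/forallP => d.
  by rewrite permE dvert_next_at.
apply/forallP => d'; apply/implyP => /eqP ed; apply: fconnect_porbit.
set A := enum [set w | dv w == dv d].
have allA : all [pred w | dv w == dv d] A by apply/allP => w; rewrite mem_enum !inE.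
have eqA : {in [pred w | dv w == dv d] &, frel (next A) =2 frel (perm next_at_inj)}.
  by move=> x y; rewrite !inE => /eqP ex _ /=; rewrite permE /next_at ex.
have fc : fcycle (perm next_at_inj) A.
  by rewrite -(eq_in_cycle eqA allA) cycle_next ?enum_uniq.
by rewrite (fconnect_cycle fc) ?mem_enum ?inE ?ed.
Qed.

Definition dart_at e x : T := (e, (ends e).1 != x).

Lemma dvert_dart_at e x : ((ends e).1 == x) || ((ends e).2 == x) -> dv (dart_at e x) = x.
Proof. by rewrite /dvert /=; case: eqP => [->|_] //= /eqP. Qed.

Lemma dvert_edge_between e x y : edge_between ends e x y ->
  dv (dart_at e x) = x /\ dv (drev (dart_at e x)) = y.
Proof. by rewrite /edge_between /dart_at /dvert /drev /=; case/orP => /eqP ->; case: eqP => //= ->. Qed.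

Lemma dvert_edge e x y z : edge_between ends e x y -> z.1 = e -> (dv z == x) || (dv z == y).
Proof.
rewrite /edge_between /dvert => exy; case: z => e' [] /= ->;
  by case/orP: exy => /eqP ->; rewrite eqxx ?orbT.
Qed.

Lemma dart_of_edge e x z : z.1 = e -> z = dart_at e x \/ z = drev (dart_at e x).
Proof. by case: z => e' [] /= ->; rewrite /dart_at /drev /=; case: (_ != x); [left|right|right|left]. Qed.

Lemma drevK : involutive (@drev E).
Proof. by case=> ? []. Qed.

Lemma dart_neq_edge (y z : T) : y.1 != z.1 -> y != z.
Proof. by apply: contra => /eqP ->. Qed.

Lemma dart_neq_dvert (y z : T) : dv y != dv z -> y != z.
Proof. by apply: contra => /eqP ->. Qed.

Lemma degree3_darts x (d1 d2 d3 : T) : degree ends x = 3 -> uniq [:: d1; d2; d3] ->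
  dv d1 = x -> dv d2 = x -> dv d3 = x -> forall z, dv z = x -> z \in [:: d1; d2; d3].
Proof.
move=> dx un e1 e2 e3 z ez.
have sub : [set z in [:: d1; d2; d3]] \subset [set z | dv z == x].
  by apply/subsetP => z'; rewrite !inE => /or3P[]/eqP->; rewrite ?e1 ?e2 ?e3.
have : [set z in [:: d1; d2; d3]] == [set z | dv z == x].
  have c3 : #|[set z in [:: d1; d2; d3]]| = 3 by rewrite cardsE (card_uniqP un).
  by rewrite eqEcard sub c3 -dx; exact: leqnn.
by move/eqP/setP/(_ z); rewrite !inE ez eqxx.
Qed.

Lemma rotation_nofix s y z : is_rotation ends s -> dv y = dv z -> y != z -> s y != y.
Proof.
case/is_rotationP => _ sorb eyz nyz; apply/eqP => sy.
by have := porbit_fixed sy (sorb _ _ eyz); move/eqP; rewrite eq_sym (negbTE nyz).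
Qed.

End RotationSystems.

Arguments dart_neq_dvert {V E} ends {y z}.

Section EulerInequality.
Variables (V E : finType) (ends : E -> V * V).
Hypothesis connG : connected_graph ends.
Local Notation dv := (dvert ends).
Local Notation T := (dart E).
Implicit Types (s : {perm T}) (e : E) (l : seq E) (z : T).

Definition edge_swap e : {perm T} := tperm (e, false) (e, true).

Definition swap_edges s l : {perm T} := foldr (fun e t => edge_swap e * t)%g s l.

Lemma edge_swapE e z : edge_swap e z = if z.1 == e then drev z else z.
Proof.
case: z => e' b /=; rewrite /edge_swap; have [->|ne] := eqVneq e' e.
  by case: b; rewrite ?tpermL ?tpermR.
by rewrite tpermD // -pair_eqE /= negb_and ?ne // eq_sym ne.
Qed.

Lemma swap_edgesE s l z : uniq l -> swap_edges s l z = s (if z.1 \in l then drev z else z).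
Proof.
elim: l z => [|e l IH] z //= /andP[el ul].
rewrite permM IH // edge_swapE in_cons; have [ze|] //= := eqVneq z.1 e.
by rewrite ze (negbTE el).
Qed.

Lemma card_porbits_swap_edges s l : #|porbits (swap_edges s l)| <= #|porbits s| + size l.
Proof.
elim: l => [|e l IH] /=; first by rewrite addn0.
by apply: leq_trans (card_porbits_tperm_le _ _ _) _; rewrite addnS ltnS.
Qed.

Lemma crossing_edge (C : {set V}) x y : x \in C -> y \notin C ->
  exists e, ((ends e).1 \in C) != ((ends e).2 \in C).
Proof.
move=> xC yC; apply/existsP; apply: contraLR yC => /existsPn ncr; rewrite negbK.
have clC : closed (adjacent ends) (mem C).
  move=> x1 y1 /existsP[e he]; have /negPn/eqP := ncr e.
  by case/orP: he => /eqP -> /=.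
by rewrite -(closed_connect clC (connG x y)).
Qed.

(* Swapping the two darts of each edge of a growing tree joins, at each step,
   the orbit of the new vertex with the others. *)
Lemma tree_swaps_join_orbits s : is_rotation ends s ->
  forall n, n < #|V| -> exists (C : {set V}) l,
  [/\ #|C| = n.+1, uniq l, size l = n,
      {in l, forall e, ((ends e).1 \in C) && ((ends e).2 \in C)} &
      #|porbits (swap_edges s l)| + n = #|porbits s|].
Proof.
case/is_rotationP=> sdv _; elim=> [|n IH] ltn.
  have /card_gt0P [x _] := ltn.
  by exists [set x], [::]; split; rewrite ?cards1 ?addn0.
have [C [l [cardC ul sl lC cnt]]] := IH (ltnW ltn).
have [x xC] : exists x, x \in C by apply/set0Pn; rewrite -card_gt0 cardC.
have [y yC] : exists y, y \notin C.
  apply/existsP; apply: contraLR ltn; rewrite negb_exists => /forallP inC.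
  rewrite -leqNgt -cardC subset_leq_card //; apply/subsetP => y _; exact/negbNE.
have [e cr] := crossing_edge xC yC.
pose dx : T := (e, (ends e).1 \notin C); pose dy := drev dx.
have [dxC dyC] : dv dx \in C /\ dv dy \notin C.
  rewrite /dy /dx /dvert /=; move: cr.
  by case h1: ((ends e).1 \in C); case h2: ((ends e).2 \in C); rewrite //= ?h1 ?h2.
have el : e \notin l.
  by apply: contra dyC => /lC /andP[h1 h2]; rewrite /dvert /=; case: ifP.
have sdy : {in [set w | dv w == dv dy], forall w, swap_edges s l w = s w}.
  move=> w; rewrite inE => /eqP wdy; rewrite swap_edgesE //; case: ifP => // /lC /andP[h1 h2].
  by move: dyC; rewrite -wdy /dvert; case: (w.2); rewrite ?h1 ?h2.
have dxy : dx \notin porbit (swap_edges s l) dy.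
  have: porbit (swap_edges s l) dy \subset [set w | dv w == dv dy].
    apply: porbit_sub_stable => [|w wdy]; first by rewrite inE.
    by move: (wdy); rewrite sdy // !inE sdv.
  move/subsetP/(_ dx)/contra; apply; rewrite inE; apply: contraNneq dyC => <-.
  by rewrite dxC.
exists (dv dy |: C), (e :: l); split => /=.
- by rewrite cardsU1 dyC cardC.
- by rewrite el ul.
- by rewrite sl.
- move=> e'; rewrite in_cons => /orP[/eqP ->|/lC /andP[h1 h2]]; last by rewrite !inE h1 h2 !orbT.
  by move: dxC; rewrite /dy /dx /dvert /=; case: ((ends e).1 \in C) => /= h; rewrite !inE ?h eqxx ?orbT.
- have -> : edge_swap e = tperm dx dy.
    by rewrite /edge_swap /dy /dx /drev /=; case: (_ \notin C); rewrite // tpermC.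
  by rewrite -cnt -(card_porbits_tperm_join dxy) addnS.
Qed.

Lemma euler_faces_le s : is_rotation ends s -> 0 < #|V| ->
  #|porbits (drev_perm E * s)| + #|V| <= #|E| + 2.
Proof.
move=> rs V0; have ltV : #|V|.-1 < #|V| by rewrite ltn_predL.
have [C [l [_ ul sl _ cnt]]] := tree_swaps_join_orbits rs ltV.
pose r := [seq e <- enum E | e \notin l].
have urs : uniq (r ++ l).
  rewrite cat_uniq ul filter_uniq ?enum_uniq //= andbT; apply/hasPn => e.
  by rewrite mem_filter => ->.
have inrs e : e \in r ++ l by rewrite mem_cat mem_filter mem_enum andbT orNb.
have szE : size r + size l = #|E|.
  rewrite -size_cat cardE; apply: perm_size; apply: uniq_perm; rewrite ?enum_uniq //.
  by move=> e; rewrite inrs mem_enum.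
have -> : (drev_perm E * s)%g = swap_edges (swap_edges s l) r.
  apply/permP => z; rewrite permM /drev_perm permE.
  by have := swap_edgesE s z urs; rewrite inrs /swap_edges foldr_cat => <-.
have := card_porbits_rotation rs; have := card_porbits_swap_edges (swap_edges s l) r.
move: cnt szE V0; rewrite sl -subn1.
move: #|porbits s| #|porbits (swap_edges s l)| #|porbits (swap_edges _ r)| (size r).
by move: #|V| #|E|; lia.
Qed.

End EulerInequality.

Section PermExtension.
Variables (T T' : finType) (j : T' -> T) (k : T -> option T').
Hypotheses (jK : pcancel j k) (kK : forall z x, k z = Some x -> j x = z).
Implicit Types (Q : {perm T'}) (x y : T') (z : T).

Let j_inj : injective j := pcan_inj jK.

Definition ext_fun Q z : T := if k z is Some x then j (Q x) else z.

Lemma ext_fun_inj Q : injective (ext_fun Q).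
Proof.
move=> z z'; rewrite /ext_fun.
case ez: (k z) => [x|]; case ez': (k z') => [x'|] //.
- by move/j_inj/perm_inj => exx; rewrite -(kK ez) -(kK ez') exx.
- by move=> e; move: ez'; rewrite -e jK.
- by move=> e; move: ez; rewrite e jK.
Qed.

Definition perm_ext Q : {perm T} := perm (@ext_fun_inj Q).

Lemma perm_extE Q x : perm_ext Q (j x) = j (Q x).
Proof. by rewrite permE /ext_fun jK. Qed.

Lemma perm_ext_out Q z : k z = None -> perm_ext Q z = z.
Proof. by rewrite permE /ext_fun => ->. Qed.

Lemma perm_extX Q i x : (perm_ext Q ^+ i)%g (j x) = j ((Q ^+ i)%g x).
Proof.
elim: i => [|i IH]; first by rewrite !expg0 !perm1.
by rewrite !expgSr !permM IH perm_extE.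
Qed.

Lemma porbit_ext Q x y : (j y \in porbit (perm_ext Q) (j x)) = (y \in porbit Q x).
Proof.
apply/porbitP/porbitP => [[i]|[i ->]]; last by exists i; rewrite perm_extX.
by rewrite perm_extX => /j_inj ->; exists i.
Qed.

Lemma porbit_ext_out Q z : k z = None -> porbit (perm_ext Q) z = [set z].
Proof.
move=> kz; apply/setP=> w; rewrite inE; apply/idP/eqP => [|->]; last exact: porbit_id.
exact: porbit_fixed (perm_ext_out Q kz).
Qed.

Lemma porbit_ext_in Q x : porbit (perm_ext Q) (j x) = j @: porbit Q x.
Proof.
apply/setP=> w; apply/idP/imsetP => [wx|[y yx ->]]; last by rewrite porbit_ext.
case ew: (k w) => [y|]; first by exists y; rewrite -?porbit_ext (kK ew).
by move: wx; rewrite porbit_sym porbit_ext_out // inE => /eqP ex; move: ew; rewrite -ex jK.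
Qed.

Lemma porbits_ext Q : porbits (perm_ext Q) =
  [set j @: X | X : {set T'} in porbits Q] :|: [set [set z] | z : T in [set z | k z == None]].
Proof.
apply/setP => X; rewrite inE; apply/imsetP/orP.
  move=> [z _ ->]; case ez: (k z) => [x|].
    by left; apply/imsetP; exists (porbit Q x); rewrite ?imset_f // -(kK ez) porbit_ext_in.
  by right; apply/imsetP; exists z; rewrite ?inE ?ez // porbit_ext_out.
case=> /imsetP [].
  by move=> Y /imsetP[x _ ->] ->; exists (j x) => //; rewrite porbit_ext_in.
by move=> z; rewrite inE => /eqP ez ->; exists z => //; rewrite porbit_ext_out.
Qed.

(* Each point outside the image of [j] adds a fixed point, hence one orbit. *)
Lemma card_porbits_ext Q : #|porbits (perm_ext Q)| = #|porbits Q| + #|[set z | k z == None]|.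
Proof.
have disj : [set j @: X | X : {set T'} in porbits Q] :&:
            [set [set z] | z : T in [set z | k z == None]] = set0.
  apply/setP=> X; rewrite !inE; apply/andP => -[/imsetP[Y /imsetP[x _ ->] ->] /imsetP[z]].
  rewrite inE => /eqP ez /setP/(_ (j x)); rewrite imset_f ?porbit_id // inE => /esym/eqP ejz.
  by move: ez; rewrite -ejz jK.
rewrite porbits_ext cardsU disj cards0 subn0.
by rewrite (card_imset _ (imset_inj j_inj)) (card_imset _ set1_inj).
Qed.

Section Restriction.
Variable s : {perm T}.
Hypothesis s_in : forall x, k (s (j x)) != None.

Definition restr_fun x : T' := if k (s (j x)) is Some y then y else x.

Lemma restr_funE x : j (restr_fun x) = s (j x).
Proof. by have := s_in x; rewrite /restr_fun; case e: (k _) => [y|] // _; exact: kK e. Qed.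

Lemma restr_fun_inj : injective restr_fun.
Proof. by move=> x y e; apply/j_inj/(@perm_inj _ s); rewrite -!restr_funE e. Qed.

Definition perm_restr : {perm T'} := perm restr_fun_inj.

Lemma perm_restrE x : j (perm_restr x) = s (j x).
Proof. by rewrite permE restr_funE. Qed.

Lemma perm_ext_restr : (forall z, k z = None -> s z = z) -> perm_ext perm_restr = s.
Proof.
move=> s_out; apply/permP => z; case ez: (k z) => [x|]; last by rewrite perm_ext_out // s_out.
by rewrite -(kK ez) perm_extE perm_restrE.
Qed.

End Restriction.
End PermExtension.

Ltac neq_hyp := first [assumption | rewrite eq_sym; assumption].

(* Evaluates [tperm x y z] for an explicit [z], reading [x != z] and [y != z] off
   the hypotheses. *)
Ltac tperm_simpl := repeat match goal with |- context [@fun_of_perm _ (@tperm _ ?x ?y) ?z] =>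
  lazymatch z with
  | context [@tperm] => fail
  | _ => first [rewrite (@tpermL _ x y) | rewrite (@tpermR _ x y) |
                rewrite (@tpermD _ x y z); [ | neq_hyp | neq_hyp]]
  end end.

Ltac uniq_hyps U :=
  let H := fresh in have H := U; move: H; rewrite /= !inE !negb_or => H;
  repeat match goal with H : is_true (_ && _) |- _ => case/andP: H => ? ? end.

Ltac mem_simpl := rewrite ?inE ?eqxx ?orbT.

Ltac notin_simpl := rewrite !inE ?negb_or; repeat (apply/andP; split); neq_hyp.

Section PorbitsCount.
Variable T : finType.
Implicit Types (s : {perm T}) (x y : T) (m n : nat).

Lemma card_porbits_tperm_fixedD s x y n m : s x = x -> x != y ->
  #|porbits s| + n = m -> #|porbits (tperm x y * s)| + n.+1 = m.
Proof. by move=> sx xy <-; rewrite -(card_porbits_tperm_fixed sx xy) addnS. Qed.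

Lemma card_porbits_tperm_fixed_leD s x y n m : s x = x -> x != y ->
  m <= #|porbits s| + n -> m <= #|porbits (tperm x y * s)| + n.+1.
Proof. by move=> sx xy; rewrite -(card_porbits_tperm_fixed sx xy) addnS. Qed.

Lemma card_porbits_tperm_leD s x y n m :
  m <= #|porbits s| + n -> m <= #|porbits (tperm x y * s)| + n.+1.
Proof. by move/leq_trans; apply; rewrite addnS -addSn leq_add2r card_porbits_tperm_ge. Qed.

End PorbitsCount.

Ltac peel_fixed fixP :=
  first [apply: card_porbits_tperm_fixedD | apply: card_porbits_tperm_fixed_leD];
  [by rewrite ?permM; tperm_simpl; rewrite fixP //; mem_simpl | neq_hyp | ].

(* The six darts [D] of the edges [a], [b], [c] deleted with [v] are [a1, b1, c1]
   at [v], [a2, b2] at [v'] and [c2] at [u]; [dd] is the third dart at [v'], [p]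
   another dart at [u], [R] the dart reversal, [dw = R dd] and [r = R p].  [S]
   plays a rotation of [G - v], [sg] a rotation of [G] and [P] the face
   permutation of [G - v], both extended by the identity on [D]. *)
Section BetaFaces.
Variables (T : finType) (a1 b1 c1 a2 b2 c2 dd dw p r : T) (R S sg P : {perm T}).
Local Notation D := [:: a1; b1; c1; a2; b2; c2].
Hypotheses (U1 : uniq [:: a1; b1; c1; a2; b2; c2; r; dw]).
Hypotheses (Ra1 : R a1 = a2) (Rb1 : R b1 = b2) (Rc1 : R c1 = c2) (Rdw : R dw = dd) (Rr : R r = p)
  (RK : involutive R).
Hypotheses (Sdd : S dd = dd) (sgp : sg p = c2) (sgc2 : sg c2 = S p)
  (sg_out : forall w, w \notin D -> w != p -> w != dd -> sg w = S w).
Hypotheses (P_in : forall z, z \in D -> P z = z) (P_out : forall z, z \notin D -> P z = S (R z)).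

Let Ra2 : R a2 = a1. Proof. by rewrite -Ra1 RK. Qed.
Let Rb2 : R b2 = b1. Proof. by rewrite -Rb1 RK. Qed.
Let Rc2 : R c2 = c1. Proof. by rewrite -Rc1 RK. Qed.
Let Rdd : R dd = dw. Proof. by rewrite -Rdw RK. Qed.
Let Rp : R p = r. Proof. by rewrite -Rr RK. Qed.

Let Pr : P r = S p.
Proof. by uniq_hyps U1; rewrite P_out ?Rr //; notin_simpl. Qed.

Let Pdw : P dw = dd.
Proof. by uniq_hyps U1; rewrite P_out ?Rdw ?Sdd //; notin_simpl. Qed.

Let R_out z : z \notin D -> z != r -> z != dw -> [/\ R z \notin D, R z != p & R z != dd].
Proof.
move=> zD zr zdw; split.
- apply: contra zD; rewrite -{2}(RK z) !inE.
  by case/or4P=> [/eqP->|/eqP->|/eqP->|/orP[/eqP->|/orP[/eqP->|/eqP->]]];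
     rewrite ?Ra1 ?Rb1 ?Rc1 ?Ra2 ?Rb2 ?Rc2 eqxx ?orbT.
- by apply: contra zr => /eqP h; rewrite -(RK z) h Rp.
- by apply: contra zdw => /eqP h; rewrite -(RK z) h Rdd.
Qed.

Let face_out z : z \notin D -> z != r -> z != dw -> sg (R z) = P z.
Proof.
move=> zD zr zdw; have [RzD Rzp Rzdd] := R_out zD zr zdw.
by rewrite P_out // sg_out.
Qed.

Let neq_D z : z \notin D ->
  [/\ z != a1, z != b1, z != c1 & [/\ z != a2, z != b2 & z != c2]].
Proof. by rewrite !inE !negb_or => /and3P[-> -> /and4P[-> -> -> ->]]. Qed.

Lemma card_porbits_beta_eq : sg a1 = b1 -> sg b1 = c1 -> sg c1 = a1 ->
  sg dd = a2 -> sg a2 = b2 -> sg b2 = dd ->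
  #|porbits (R * sg)| + 6 = #|porbits P|.
Proof.
move=> s1 s2 s3 s4 s5 s6; uniq_hyps U1.
have -> : (R * sg)%g = (tperm b1 a2 * (tperm a2 dw * (tperm c1 b2 * (tperm b2 a1 *
            (tperm a1 c2 * (tperm c2 r * P))))))%g.
  apply/permP => z; rewrite !permM; case zD: (z \in D).
    move: zD; rewrite !inE => /or4P[/eqP->|/eqP->|/eqP->|/orP[/eqP->|/orP[/eqP->|/eqP->]]];
    tperm_simpl; rewrite ?Ra1 ?Rb1 ?Rc1 ?Ra2 ?Rb2 ?Rc2 ?Pr ?Pdw ?P_in //; by mem_simpl.
  have [->|zr] := eqVneq z r; first by tperm_simpl; rewrite Rr sgp P_in //; mem_simpl.
  have [->|zdw] := eqVneq z dw; first by tperm_simpl; rewrite Rdw s4 P_in //; mem_simpl.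
  have [? ? ? [? ? ?]] := neq_D (negbT zD).
  by tperm_simpl; rewrite face_out ?zD.
by do 6 peel_fixed P_in; rewrite addn0.
Qed.

(* In this orientation the two parallel edges bound a face of length two. *)
Lemma card_porbits_beta_le : sg a1 = b1 -> sg b1 = c1 -> sg c1 = a1 ->
  sg dd = b2 -> sg b2 = a2 -> sg a2 = dd ->
  #|porbits P| <= #|porbits (R * sg)| + 6.
Proof.
move=> s1 s2 s3 s4 s5 s6; uniq_hyps U1.
have -> : (R * sg)%g = (tperm a2 b1 * (tperm a1 c1 * (tperm c1 b2 * (tperm b2 dw *
            (tperm a1 c2 * (tperm c2 r * P))))))%g.
  apply/permP => z; rewrite !permM; case zD: (z \in D).
    move: zD; rewrite !inE => /or4P[/eqP->|/eqP->|/eqP->|/orP[/eqP->|/orP[/eqP->|/eqP->]]];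
    tperm_simpl; rewrite ?Ra1 ?Rb1 ?Rc1 ?Ra2 ?Rb2 ?Rc2 ?Pr ?Pdw ?P_in //; by mem_simpl.
  have [->|zr] := eqVneq z r; first by tperm_simpl; rewrite Rr sgp P_in //; mem_simpl.
  have [->|zdw] := eqVneq z dw; first by tperm_simpl; rewrite Rdw s4 P_in //; mem_simpl.
  have [? ? ? [? ? ?]] := neq_D (negbT zD).
  by tperm_simpl; rewrite face_out ?zD.
peel_fixed P_in; apply: card_porbits_tperm_leD.
by do 4 peel_fixed P_in; rewrite addn0.
Qed.

End BetaFaces.

Section BetaRotations.
Variables (T : finType) (a1 b1 c1 a2 b2 c2 dd p : T).
Local Notation D := [:: a1; b1; c1; a2; b2; c2].
Hypothesis U2 : uniq [:: a1; b1; c1; a2; b2; c2; p; dd].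

Let neq_D w : w \notin D ->
  [/\ w != a1, w != b1, w != c1 & [/\ w != a2, w != b2 & w != c2]].
Proof. by rewrite !inE !negb_or => /and3P[-> -> /and4P[-> -> -> ->]]. Qed.

Lemma rotation_insert_beta (S : {perm T}) : (forall z, z \in D -> S z = z) -> S dd = dd ->
  exists sg : {perm T},
  [/\ sg p = c2 /\ sg c2 = S p,
      (forall w, w \notin D -> w != p -> w != dd -> sg w = S w),
      sg a1 = b1 /\ sg b1 = c1 /\ sg c1 = a1,
      sg dd = a2 /\ sg a2 = b2 /\ sg b2 = dd &
      (forall z w, w \in porbit S z -> w \in porbit sg z)].
Proof.
move=> S_in Sdd; uniq_hyps U2.
have [Sa1 Sb1 Sc1 Sa2 [Sb2 Sc2]] :
    [/\ S a1 = a1, S b1 = b1, S c1 = c1, S a2 = a2 & S b2 = b2 /\ S c2 = c2].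
  by do ?split; apply: S_in; mem_simpl.
exists (tperm b2 a2 * (tperm a2 dd * (tperm c1 b1 * (tperm b1 a1 * (tperm c2 p * S)))))%g.
split.
- by rewrite !permM; tperm_simpl; rewrite ?Sc2.
- by move=> w /neq_D [? ? ? [? ? ?]] ? ?; rewrite !permM; tperm_simpl.
- by rewrite !permM; tperm_simpl; rewrite ?Sa1 ?Sb1 ?Sc1.
- by rewrite !permM; tperm_simpl; rewrite ?Sa2 ?Sb2 ?Sdd.
- move=> z w zw.
  do 4 (apply: porbit_tperm_insert;
        first by rewrite !permM; tperm_simpl; rewrite ?Sa1 ?Sb1 ?Sc1 ?Sa2 ?Sb2 ?Sc2).
  exact: porbit_tperm_insert zw.
Qed.

Lemma porbit_cut_beta (sg : {perm T}) x1 y1 x2 y2 x3 y3 x4 y4 : sg p = c2 ->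
  (tperm c2 p * sg)%g y1 = x1 ->
  (tperm x1 y1 * (tperm c2 p * sg))%g y2 = x2 ->
  (tperm x2 y2 * (tperm x1 y1 * (tperm c2 p * sg)))%g y3 = x3 ->
  (tperm x3 y3 * (tperm x2 y2 * (tperm x1 y1 * (tperm c2 p * sg))))%g y4 = x4 ->
  x1 \in D -> x2 \in D -> x3 \in D -> x4 \in D ->
  forall z w, z \notin D -> w \notin D -> w \in porbit sg z ->
  w \in porbit (tperm x4 y4 * (tperm x3 y3 * (tperm x2 y2 *
                 (tperm x1 y1 * (tperm c2 p * sg)))))%g z.
Proof.
move=> sgp e1 e2 e3 e4 D1 D2 D3 D4 z w zD wD zw.
have outD x : x \in D -> z != x /\ w != x.
  by move=> xD; split; [apply: contraNneq zD | apply: contraNneq wD] => ->.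
have [? ?] := outD _ D1; have [? ?] := outD _ D2; have [? ?] := outD _ D3.
have [? ?] := outD _ D4; have [? ?] : z != c2 /\ w != c2 by apply: outD; mem_simpl.
by do 5 apply: porbit_tperm_cut => //.
Qed.

Lemma rotation_delete_beta (sg : {perm T}) : sg p = c2 ->
  (sg a1 = b1 /\ sg b1 = c1 /\ sg c1 = a1) \/ (sg a1 = c1 /\ sg c1 = b1 /\ sg b1 = a1) ->
  (sg dd = a2 /\ sg a2 = b2 /\ sg b2 = dd) \/ (sg dd = b2 /\ sg b2 = a2 /\ sg a2 = dd) ->
  exists S : {perm T},
  [/\ (forall z, z \in D -> S z = z), S dd = dd, S p = sg c2,
      (forall w, w \notin D -> w != p -> w != dd -> S w = sg w) &
      (forall z w, z \notin D -> w \notin D -> w \in porbit sg z -> w \in porbit S z)].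
Proof.
move=> sgp sgv sgv'; uniq_hyps U2.
case: sgv => [[v1 [v2 v3]]|[v1 [v2 v3]]]; case: sgv' => [[w1 [w2 w3]]|[w1 [w2 w3]]];
  [ exists (tperm b2 dd * (tperm a2 dd * (tperm c1 a1 * (tperm b1 a1 * (tperm c2 p * sg)))))%g
  | exists (tperm a2 dd * (tperm b2 dd * (tperm c1 a1 * (tperm b1 a1 * (tperm c2 p * sg)))))%g
  | exists (tperm b2 dd * (tperm a2 dd * (tperm b1 a1 * (tperm c1 a1 * (tperm c2 p * sg)))))%g
  | exists (tperm a2 dd * (tperm b2 dd * (tperm b1 a1 * (tperm c1 a1 * (tperm c2 p * sg)))))%g ];
  split.
all: try by rewrite !permM; tperm_simpl.
all: try by move=> w /neq_D [? ? ? [? ? ?]] ? ?; rewrite !permM; tperm_simpl.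
all: try by move=> z; rewrite !inE => /or4P[/eqP->|/eqP->|/eqP->|/orP[/eqP->|/orP[/eqP->|/eqP->]]];
  rewrite !permM; tperm_simpl.
all: by apply: porbit_cut_beta => //; rewrite ?permM; tperm_simpl; mem_simpl.
Qed.

End BetaRotations.

Section VertexDeletion.
Variables (V E : finType) (ends : E -> V * V) (v : V).
Local Notation dv := (dvert ends).
Local Notation T := (dart E).
Local Notation EH := (del_E ends v).
Local Notation endsH := (del_ends ends v).
Local Notation TH := (dart EH).
Implicit Types (x : TH) (z : T).

Definition dart_of_del x : T := (val x.1, x.2).

Definition dart_to_del z : option TH := omap (fun e => (e, z.2)) (insub z.1 : option EH).

Lemma dart_of_delK : pcancel dart_of_del dart_to_del.
Proof. by case=> e b; rewrite /dart_to_del /dart_of_del /= valK. Qed.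

Lemma dart_to_delK z x : dart_to_del z = Some x -> dart_of_del x = z.
Proof.
rewrite /dart_to_del; case: insubP => [e _ ve|_] //= [<-].
by rewrite /dart_of_del /= ve; case: z {ve}.
Qed.

Lemma dart_to_del_None z :
  (dart_to_del z == None) = ((ends z.1).1 == v) || ((ends z.1).2 == v).
Proof.
rewrite /dart_to_del -[_ || _]negbK negb_or; by case: insubP => [e -> _|/negbTE ->].
Qed.

Lemma dart_of_del_drev x : dart_of_del (drev x) = drev (dart_of_del x).
Proof. by case: x. Qed.

Lemma dvert_del x : val (dvert endsH x) = dv (dart_of_del x).
Proof. by case: x => [[e pe] []]. Qed.

Lemma dart_of_del_exists z : dart_to_del z != None -> exists x, z = dart_of_del x.
Proof. by case e: (dart_to_del z) => [x|] // _; exists x; rewrite (dart_to_delK e). Qed.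

Local Notation ext := (perm_ext dart_of_delK dart_to_delK).

Lemma face_ext_del (sH : {perm TH}) z :
  dart_to_del z != None -> ext (drev_perm EH * sH)%g z = ext sH (drev z).
Proof.
case/dart_of_del_exists => x ->; rewrite -dart_of_del_drev !perm_extE.
by rewrite permM permE.
Qed.

Lemma ext_rotation_del (sH : {perm TH}) : is_rotation endsH sH ->
  (forall z, dv (ext sH z) = dv z) /\
  (forall z z', dart_to_del z != None -> dart_to_del z' != None -> dv z = dv z' ->
     z' \in porbit (ext sH) z).
Proof.
case/is_rotationP => sHdv sHorb; split=> [z|z z'].
  case ez: (dart_to_del z) => [x|]; last by rewrite perm_ext_out.
  by rewrite -(dart_to_delK ez) perm_extE -!dvert_del sHdv.
case/dart_of_del_exists => x ->; case/dart_of_del_exists => x' -> exx'.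
by rewrite porbit_ext; apply: sHorb; apply: val_inj; rewrite !dvert_del.
Qed.

Lemma card_del_V : #|{: del_V v}| + 1 = #|V|.
Proof.
rewrite card_sig (eq_card (B := predC1 v)) ?cardC1; last by move=> x; rewrite !inE.
by rewrite addn1 prednK //; apply/card_gt0P; exists v.
Qed.

Lemma card_del_E : #|{: EH}| + #|[set e | ((ends e).1 == v) || ((ends e).2 == v)]| = #|E|.
Proof.
rewrite card_sig -(cardC [set e | ((ends e).1 == v) || ((ends e).2 == v)]) addnC.
by congr (_ + _); apply: eq_card => e; rewrite !inE negb_or.
Qed.

End VertexDeletion.

Lemma nfaces_witness (E : finType) (s : {perm dart E}) (e : E) :
  nfaces s = #|porbits (drev_perm E * s)|.
Proof.
have /negbTE E0 : #|{: dart E}| != 0 by rewrite -lt0n; apply/card_gt0P; exists (e, true).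
by rewrite /nfaces E0 addn0.
Qed.

(* Deleting a vertex incident with three edges: [E = EH + 3], [V = VH + 1]. *)
Lemma genus_del_shift e n f : f + n <= e + 2 ->
  ((e + 3 + 2) - (n + 1 + f))./2 = ((e + 2) - (n + f))./2 + 1.
Proof.
move=> efn; have -> : (e + 3 + 2) - (n + 1 + f) = ((e + 2) - (n + f)).+2 by lia.
by rewrite addn1.
Qed.

Lemma genus_del_shift_le e n f g : f <= g ->
  ((e + 3 + 2) - (n + 1 + g))./2 <= ((e + 2) - (n + f))./2 + 1.
Proof.
move=> fg; have h : (e + 3 + 2) - (n + 1 + g) <= ((e + 2) - (n + f)).+2 by lia.
by apply: leq_trans (half_leq h) _; rewrite addn1.
Qed.

Section BetaVertex.
Variables (V E : finType) (ends : E -> V * V) (v v' u w : V) (a b c d : E).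
Hypotheses (nvv : v != v') (nuv : u != v) (nuv' : u != v')
  (nab : a != b) (nca : c != a) (ncb : c != b) (nda : d != a) (ndb : d != b)
  (ea : edge_between ends a v v') (eb : edge_between ends b v v')
  (ec : edge_between ends c v u) (ed : edge_between ends d v' w)
  (deg_v : degree ends v = 3) (deg_v' : degree ends v' = 3) (deg_u : 1 < degree ends u).

Local Notation dv := (dvert ends).
Local Notation T := (dart E).
Local Notation EH := (del_E ends v).
Local Notation endsH := (del_ends ends v).
Local Notation TH := (dart EH).
Local Notation ext := (perm_ext (@dart_of_delK _ _ ends v) (@dart_to_delK _ _ ends v)).

Let a1 := dart_at ends a v. Let b1 := dart_at ends b v. Let c1 := dart_at ends c v.
Let a2 := drev a1. Let b2 := drev b1. Let c2 := drev c1.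
Let dd := dart_at ends d v'. Let dw := drev dd.
Local Notation D := [:: a1; b1; c1; a2; b2; c2].

Let dva1 : dv a1 = v. Proof. exact: (dvert_edge_between ea).1. Qed.
Let dva2 : dv a2 = v'. Proof. exact: (dvert_edge_between ea).2. Qed.
Let dvb1 : dv b1 = v. Proof. exact: (dvert_edge_between eb).1. Qed.
Let dvb2 : dv b2 = v'. Proof. exact: (dvert_edge_between eb).2. Qed.
Let dvc1 : dv c1 = v. Proof. exact: (dvert_edge_between ec).1. Qed.
Let dvc2 : dv c2 = u. Proof. exact: (dvert_edge_between ec).2. Qed.
Let dvdd : dv dd = v'. Proof. exact: (dvert_edge_between ed).1. Qed.

Let ndc : d != c.
Proof.
apply: contraNneq nvv => dc.
have /orP[/eqP dd_v|/eqP dd_u] := dvert_edge (z := dd) ec dc; first by rewrite -dd_v dvdd.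
by move: nuv'; rewrite -dd_u dvdd eqxx.
Qed.

Let uniq_v : uniq [:: a1; b1; c1].
Proof. by rewrite /= !inE !negb_or !andbT; repeat (apply/andP; split); apply: dart_neq_edge => //=; neq_hyp. Qed.

Let uniq_v' : uniq [:: dd; a2; b2].
Proof. by rewrite /= !inE !negb_or !andbT; repeat (apply/andP; split); apply: dart_neq_edge => //=; neq_hyp. Qed.

Let darts_at_v : forall z, dv z = v -> z \in [:: a1; b1; c1].
Proof. exact: degree3_darts deg_v uniq_v dva1 dvb1 dvc1. Qed.

Let darts_at_v' : forall z, dv z = v' -> z \in [:: dd; a2; b2].
Proof. exact: degree3_darts deg_v' uniq_v' dvdd dva2 dvb2. Qed.

Let mem_D z : (z \in D) = (z.1 \in [:: a; b; c]).
Proof.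
apply/idP/idP.
  by rewrite !inE => /or4P[/eqP->|/eqP->|/eqP->|/orP[/eqP->|/orP[/eqP->|/eqP->]]]; rewrite /= eqxx ?orbT.
by rewrite !inE => /or3P[]/eqP/(dart_of_edge ends v)[]->; rewrite eqxx ?orbT.
Qed.

Let dart_to_del_D z : (dart_to_del ends v z == None) = (z \in D).
Proof.
rewrite dart_to_del_None mem_D; apply/idP/idP => [/dvert_dart_at/darts_at_v|].
  by rewrite !inE /dart_at => /or3P[]/eqP[->]; rewrite eqxx ?orbT.
rewrite !inE => /or3P[]/eqP->; [case/orP: ea | case/orP: eb | case/orP: ec];
  by move=> /eqP ->; rewrite eqxx ?orbT.
Qed.

Let dvert_D z : z \in D -> z != c2 -> dv z \in [:: v; v'].
Proof.
rewrite !inE => /or4P[/eqP->|/eqP->|/eqP->|/orP[/eqP->|/orP[/eqP->|/eqP->]]];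
by rewrite ?dva1 ?dvb1 ?dvc1 ?dva2 ?dvb2 ?eqxx ?orbT.
Qed.

Let D_notin_u z : dv z = u -> z != c2 -> z \notin D.
Proof.
move=> zu zc2; apply/negP => /dvert_D/(_ zc2).
by rewrite zu !inE (negbTE nuv) (negbTE nuv').
Qed.

Let dart_at_u : exists p, dv p = u /\ p != c2.
Proof.
have : 0 < #|[set z : T | dv z == u] :\ c2|.
  by move: deg_u; rewrite /degree (cardsD1 c2); case: (_ \in _); rewrite ?add1n // => /ltnW.
by case/card_gt0P => z; rewrite !inE => /andP[zc2 /eqP zu]; exists z.
Qed.

Section OtherDartAtU.
Variable p : T.
Hypotheses (pu : dv p = u) (pc2 : p != c2).

Let p_neq : [/\ p.1 != a, p.1 != b, p.1 != c, p != dd & drev p != dw].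
Proof.
have : p.1 \notin [:: a; b; c] by rewrite -mem_D D_notin_u.
rewrite !inE !negb_or => /and3P[pa pb pc]; split => //.
  by apply: (dart_neq_dvert ends); rewrite pu dvdd.
apply: contraNneq nuv' => pdw; have pdd : p = dd by rewrite -[p]drevK pdw /dw drevK.
by rewrite -pu pdd dvdd.
Qed.

Ltac dart_neq :=
  have [? ? ? ? ?] := p_neq;
  rewrite /= !inE !negb_or !andbT; repeat (apply/andP; split);
  first [ apply: dart_neq_edge => /=; neq_hyp
        | apply: (dart_neq_dvert ends); rewrite ?dva1 ?dva2 ?dvb1 ?dvb2 ?dvc1 ?dvc2 ?dvdd; neq_hyp
        | neq_hyp ].

Lemma uniq_beta_faces : uniq [:: a1; b1; c1; a2; b2; c2; drev p; dw].
Proof. by dart_neq. Qed.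

Lemma uniq_beta_faces_swap : uniq [:: b1; a1; c1; b2; a2; c2; drev p; dw].
Proof. by dart_neq. Qed.

Lemma uniq_beta_rotation : uniq [:: a1; b1; c1; a2; b2; c2; p; dd].
Proof. by dart_neq. Qed.

End OtherDartAtU.

Let card_D : #|[set z | dart_to_del ends v z == None]| = 6.
Proof.
have [p [pu pc2]] := dart_at_u.
have := uniq_beta_faces pu pc2; rewrite -[[:: a1; _; _; _; _; _; _; _]]/(D ++ _) cat_uniq.
case/and3P => uD _ _; rewrite -[6]/(size D) -(card_uniqP uD).
by apply: eq_card => z; rewrite inE dart_to_del_D.
Qed.

Let out_D z : z \notin D -> dart_to_del ends v z != None.
Proof. by rewrite dart_to_del_D. Qed.

Let dd_notin_D : dd \notin D.
Proof. by rewrite mem_D !inE !negb_or nda ndb ndc. Qed.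

Lemma ext_rotation_beta (sH : {perm TH}) : is_rotation endsH sH ->
  [/\ {in D, forall z, ext sH z = z}, forall z, dv (ext sH z) = dv z, ext sH dd = dd &
      forall z z', z \notin D -> z' \notin D -> dv z = dv z' -> z' \in porbit (ext sH) z].
Proof.
move=> rH; have [Sdv Sorb] := ext_rotation_del rH.
have S_in : {in D, forall z, ext sH z = z}.
  by move=> z zD; apply: perm_ext_out; apply/eqP; rewrite dart_to_del_D.
split=> // [|z z' /out_D zD /out_D z'D]; last exact: Sorb.
have [x ddx] := dart_of_del_exists (out_D dd_notin_D).
have : ext sH dd \notin D by rewrite ddx perm_extE -dart_to_del_D dart_of_delK.
have : ext sH dd \in [:: dd; a2; b2] by apply: darts_at_v'; rewrite Sdv dvdd.
by rewrite !inE => /or3P[]/eqP ->; rewrite ?inE ?eqxx ?orbT.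
Qed.

Let face_ext_in (sH : {perm TH}) : {in D, forall z, ext (drev_perm EH * sH)%g z = z}.
Proof. by move=> z zD; apply: perm_ext_out; apply/eqP; rewrite dart_to_del_D. Qed.

Let face_ext_out (sH : {perm TH}) z :
  z \notin D -> ext (drev_perm EH * sH)%g z = ext sH (drev_perm E z).
Proof. by move/out_D/face_ext_del => ->; rewrite [drev_perm E z]permE. Qed.

Let card_faces_ext (sH : {perm TH}) :
  #|porbits (ext (drev_perm EH * sH)%g)| = #|porbits (drev_perm EH * sH)| + 6.
Proof. by rewrite card_porbits_ext card_D. Qed.

Let drev_permK : involutive (drev_perm E).
Proof. by move=> z; rewrite !permE drevK. Qed.

Section Lift.
Variables (sH : {perm TH}) (p : T) (sg : {perm T}).
Hypotheses (rH : is_rotation endsH sH) (pu : dv p = u) (pc2 : p != c2).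
Hypotheses (sgp : sg p = c2) (sgc2 : sg c2 = ext sH p)
  (sg_out : forall w, w \notin D -> w != p -> w != dd -> sg w = ext sH w)
  (sga1 : sg a1 = b1) (sgb1 : sg b1 = c1) (sgc1 : sg c1 = a1)
  (sgdd : sg dd = a2) (sga2 : sg a2 = b2) (sgb2 : sg b2 = dd)
  (sg_porbit : forall z w, w \in porbit (ext sH) z -> w \in porbit sg z).

Lemma is_rotation_lift : is_rotation ends sg.
Proof.
have [S_in Sdv Sdd Sorb] := ext_rotation_beta rH.
have pD := D_notin_u pu pc2.
apply/andP; split; apply/forallP => z.
  apply/eqP; case zD: (z \in D).
    move: zD; rewrite !inE => /or4P[/eqP->|/eqP->|/eqP->|/orP[/eqP->|/orP[/eqP->|/eqP->]]];
    by rewrite ?sga1 ?sgb1 ?sgc1 ?sga2 ?sgb2 ?sgc2 ?Sdv ?pu ?dva1 ?dvb1 ?dvc1 ?dva2 ?dvb2 ?dvc2 ?dvdd.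
  have [->|zp] := eqVneq z p; first by rewrite sgp dvc2 pu.
  have [->|zdd] := eqVneq z dd; first by rewrite sgdd dva2 dvdd.
  by rewrite sg_out ?zD // Sdv.
apply/forallP => z'; apply/implyP => /eqP zz'.
have [zv|zv] := eqVneq (dv z) v.
  have z'v : dv z' = v by rewrite -zz'.
  exact: porbit_same (porbit_3cycle sga1 sgb1 (darts_at_v zv))
                     (porbit_3cycle sga1 sgb1 (darts_at_v z'v)).
have [zv'|zv'] := eqVneq (dv z) v'.
  have z'v' : dv z' = v' by rewrite -zz'.
  exact: porbit_same (porbit_3cycle sgdd sga2 (darts_at_v' zv'))
                     (porbit_3cycle sgdd sga2 (darts_at_v' z'v')).
have nD t : dv t = dv z -> t != c2 -> t \notin D.
  move=> tz tc2; apply/negP => /dvert_D/(_ tc2).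
  by rewrite tz !inE (negbTE zv) (negbTE zv').
have orbD t t' : t \notin D -> t' \notin D -> dv t = dv t' -> t' \in porbit sg t.
  by move=> tD t'D tt'; apply: sg_porbit; apply: Sorb.
have c2p : c2 \in porbit sg p by rewrite -sgp porbit_next.
have [zc|zc] := eqVneq z c2; have [z'c|z'c] := eqVneq z' c2.
- by rewrite zc z'c porbit_id.
- rewrite zc; apply: porbit_same c2p _; apply: orbD => //; first exact: nD.
  by rewrite pu -zz' zc dvc2.
- rewrite z'c; apply: porbit_trans (orbD _ _ (nD _ erefl zc) pD _) c2p.
  by rewrite pu -dvc2 -z'c -zz'.
- by apply: orbD; [exact: nD | apply: nD z'c; rewrite -zz' | ].
Qed.

Lemma card_faces_lift : #|porbits (drev_perm E * sg)| = #|porbits (drev_perm EH * sH)|.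
Proof.
have [_ _ Sdd _] := ext_rotation_beta rH.
apply/eqP; rewrite -(eqn_add2r 6) -card_faces_ext; apply/eqP.
apply: (card_porbits_beta_eq (p := p) (dd := dd) (S := ext sH) (R := drev_perm E)
          (uniq_beta_faces pu pc2)) => //.
all: by [exact: face_ext_in | exact: face_ext_out | exact: drev_permK | rewrite permE ?drevK].
Qed.

End Lift.

Lemma faces_lift (sH : {perm TH}) : is_rotation endsH sH ->
  exists2 sg : {perm T}, is_rotation ends sg &
    #|porbits (drev_perm E * sg)| = #|porbits (drev_perm EH * sH)|.
Proof.
move=> rH; have [S_in _ Sdd _] := ext_rotation_beta rH.
have [p [pu pc2]] := dart_at_u.
have [sg [[sgp sgc2] sg_out [s1 [s2 s3]] [s4 [s5 s6]] sgorb]] :=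
  rotation_insert_beta (uniq_beta_rotation pu pc2) S_in Sdd.
exists sg; first exact: (is_rotation_lift (p := p) (sH := sH)).
exact: (card_faces_lift (p := p) (sH := sH)).
Qed.

Lemma rotation_beta_orientations (sg : {perm T}) : is_rotation ends sg ->
  ((sg a1 = b1 /\ sg b1 = c1 /\ sg c1 = a1) \/ (sg a1 = c1 /\ sg c1 = b1 /\ sg b1 = a1)) /\
  ((sg dd = a2 /\ sg a2 = b2 /\ sg b2 = dd) \/ (sg dd = b2 /\ sg b2 = a2 /\ sg a2 = dd)).
Proof.
move=> rs; have [sgdv _] := is_rotationP rs.
have nofix y z : dv y = dv z -> y != z -> sg y != y by apply: rotation_nofix.
move: (uniq_v) (uniq_v'); rewrite /= !inE !negb_or !andbT => /andP[/andP[n1 n2] n3] /andP[/andP[m1 m2] m3].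
split; apply: perm_3cycle; rewrite ?uniq_v ?uniq_v' //.
all: try by [apply: darts_at_v; rewrite sgdv | apply: darts_at_v'; rewrite sgdv].
- by apply: (nofix _ b1); rewrite ?dva1 ?dvb1.
- by apply: (nofix _ a1); rewrite ?dva1 ?dvb1 // eq_sym.
- by apply: (nofix _ a1); rewrite ?dva1 ?dvc1 // eq_sym.
- by apply: (nofix _ a2); rewrite ?dva2 ?dvdd.
- by apply: (nofix _ dd); rewrite ?dva2 ?dvdd // eq_sym.
- by apply: (nofix _ dd); rewrite ?dvb2 ?dvdd // eq_sym.
Qed.

Let mem_D_swap z : (z \in [:: b1; a1; c1; b2; a2; c2]) = (z \in D).
Proof. by rewrite !inE; case: (z == a1); case: (z == b1); case: (z == a2); case: (z == b2); rewrite ?orbT. Qed.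

Section Restrict.
Variables (sg : {perm T}) (p : T) (S : {perm T}).
Hypotheses (rs : is_rotation ends sg) (pu : dv p = u) (pc2 : p != c2) (sgp : sg p = c2).
Hypotheses (S_in : forall z, z \in D -> S z = z) (Sdd : S dd = dd) (Sp : S p = sg c2)
  (S_out : forall w, w \notin D -> w != p -> w != dd -> S w = sg w)
  (S_porbit : forall z w, z \notin D -> w \notin D -> w \in porbit sg z -> w \in porbit S z).

Let S_del (x : TH) : dart_to_del ends v (S (dart_of_del x)) != None.
Proof.
rewrite dart_to_del_D; apply/negP => SxD.
have Sx := perm_inj (S_in SxD).
by move: SxD; rewrite Sx -dart_to_del_D dart_of_delK.
Qed.

Let sH : {perm TH} := perm_restr (@dart_of_delK _ _ ends v) (@dart_to_delK _ _ ends v) S_del.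

Let ext_sH : ext sH = S.
Proof. by apply: perm_ext_restr => z /eqP; rewrite dart_to_del_D; apply: S_in. Qed.

Let Sdv z : dv (S z) = dv z.
Proof.
have [sgdv _] := is_rotationP rs.
case zD: (z \in D); first by rewrite S_in.
have [->|zp] := eqVneq z p; first by rewrite Sp sgdv dvc2 pu.
have [->|zdd] := eqVneq z dd; first by rewrite Sdd.
by rewrite S_out ?zD // sgdv.
Qed.

Lemma is_rotation_restr : is_rotation endsH sH.
Proof.
have [_ sgorb] := is_rotationP rs.
apply/andP; split; apply/forallP => x.
  by apply/eqP/val_inj; rewrite !dvert_del perm_restrE Sdv.
apply/forallP => x'; apply/implyP => /eqP xx'.
rewrite -(porbit_ext (@dart_of_delK _ _ ends v) (@dart_to_delK _ _ ends v)) ext_sH.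
apply: S_porbit; rewrite -?dart_to_del_D ?dart_of_delK //; apply: sgorb.
by rewrite -!dvert_del xx'.
Qed.

Lemma card_faces_restr : #|porbits (drev_perm EH * sH)| <= #|porbits (drev_perm E * sg)|.
Proof.
have pD := D_notin_u pu pc2.
have sgc2 : sg c2 = S p by rewrite Sp.
have sg_out t : t \notin D -> t != p -> t != dd -> sg t = S t by move=> *; rewrite S_out.
have P_in := face_ext_in sH.
have P_out z : z \notin D -> ext (drev_perm EH * sH)%g z = S (drev_perm E z).
  by move/face_ext_out ->; rewrite ext_sH.
have sg_out' t : t \notin [:: b1; a1; c1; b2; a2; c2] -> t != p -> t != dd -> sg t = S t.
  by rewrite mem_D_swap; apply: sg_out.
have P_in' z : z \in [:: b1; a1; c1; b2; a2; c2] -> ext (drev_perm EH * sH)%g z = z.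
  by rewrite mem_D_swap; apply: P_in.
have P_out' z : z \notin [:: b1; a1; c1; b2; a2; c2] ->
    ext (drev_perm EH * sH)%g z = S (drev_perm E z).
  by rewrite mem_D_swap; apply: P_out.
have [Ra1 Rb1 Rc1 Rdw] : [/\ drev_perm E a1 = a2, drev_perm E b1 = b2,
    drev_perm E c1 = c2 & drev_perm E dw = dd] by rewrite !permE ?drevK.
have Rr : drev_perm E (drev p) = p by rewrite permE drevK.
have U := uniq_beta_faces pu pc2; have U' := uniq_beta_faces_swap pu pc2.
rewrite -(leq_add2r 6) -card_faces_ext.
have [[[s1 [s2 s3]]|[s1 [s3 s2]]] [[t1 [t2 t3]]|[t1 [t3 t2]]]] := rotation_beta_orientations rs.
- by rewrite -(card_porbits_beta_eq U Ra1 Rb1 Rc1 Rdw Rr drev_permK Sdd sgp sgc2 sg_out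
                 P_in P_out s1 s2 s3 t1 t2 t3).
- exact: (card_porbits_beta_le U Ra1 Rb1 Rc1 Rdw Rr drev_permK Sdd sgp sgc2 sg_out
            P_in P_out s1 s2 s3 t1 t3 t2).
- exact: (card_porbits_beta_le U' Rb1 Ra1 Rc1 Rdw Rr drev_permK Sdd sgp sgc2 sg_out'
            P_in' P_out' s2 s1 s3 t1 t2 t3).
- by rewrite -(card_porbits_beta_eq U' Rb1 Ra1 Rc1 Rdw Rr drev_permK Sdd sgp sgc2 sg_out'
                 P_in' P_out' s2 s1 s3 t1 t3 t2).
Qed.

End Restrict.

Lemma faces_restrict (sg : {perm T}) : is_rotation ends sg ->
  exists2 sH : {perm TH}, is_rotation endsH sH &
    #|porbits (drev_perm EH * sH)| <= #|porbits (drev_perm E * sg)|.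
Proof.
move=> rs; have [sgdv _] := is_rotationP rs.
have [q [qu qc2]] := dart_at_u.
pose p := (sg^-1)%g c2.
have sgp : sg p = c2 by rewrite /p permKV.
have pu : dv p = u by rewrite -sgdv sgp dvc2.
have pc2 : p != c2.
  have sgc2 : sg c2 != c2 by apply: (rotation_nofix (z := q) rs); rewrite ?qu ?dvc2 // eq_sym.
  by apply: contraNneq sgc2 => pc; rewrite -{1}pc sgp.
have [hV hW] := rotation_beta_orientations rs.
have [S [S_in Sdd Sp S_out Sorb]] := rotation_delete_beta (uniq_beta_rotation pu pc2) sgp hV hW.
have rH := is_rotation_restr rs pu S_in Sdd Sp S_out Sorb.
by eexists; [exact: rH | exact: card_faces_restr rs pu pc2 sgp S_in Sdd Sp S_out].
Qed.

Let card_incident : #|[set e | ((ends e).1 == v) || ((ends e).2 == v)]| = 3.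
Proof.
have -> : [set e | ((ends e).1 == v) || ((ends e).2 == v)] = [set e in [:: a; b; c]].
  by apply/setP => e; rewrite !in_set -(dart_to_del_None ends v (e, true)) dart_to_del_D mem_D.
have uabc : uniq [:: a; b; c] by rewrite /= !inE !negb_or nab eq_sym nca eq_sym ncb.
by rewrite cardsE (card_uniqP uabc).
Qed.

Lemma max_genus_del_beta : connected_graph endsH -> max_genus endsH + 1 = max_genus ends.
Proof.
move=> connH; have cV := card_del_V v.
have cE : #|{: EH}| + 3 = #|E| by rewrite -card_incident card_del_E.
have VH0 : 0 < #|{: del_V v}|.
  have v'v : v' != v by rewrite eq_sym.
  by apply/card_gt0P; exists (exist _ v' v'v).
have [xH _] := dart_of_del_exists (out_D dd_notin_D).
have genus_lift sH : is_rotation endsH sH -> emb_genus (del_V v) sH + 1 <= max_genus ends.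
  move=> rH; have [sg rs fsg] := faces_lift rH.
  apply: leq_trans (leq_bigmax_cond _ rs); apply: eq_leq.
  rewrite /emb_genus (nfaces_witness sg a) (nfaces_witness sH xH.1) fsg -cV -cE.
  by rewrite (genus_del_shift (euler_faces_le connH rH VH0)).
apply/eqP; rewrite eqn_leq; apply/andP; split.
  have [s0 r0] := rotation_exists endsH.
  have rot0 : 0 < #|[pred s | is_rotation endsH s]| by apply/card_gt0P; exists s0.
  have [sH rH maxH] := eq_bigmax_cond (@emb_genus (del_V v) EH) rot0.
  have -> : max_genus endsH = emb_genus (del_V v) sH by exact: maxH.
  exact: genus_lift.
apply/bigmax_leqP => sg rs; have [sH rH fle] := faces_restrict rs.
apply: leq_trans (_ : emb_genus (del_V v) sH + 1 <= _); last by rewrite leq_add2r leq_bigmax_cond.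
rewrite /emb_genus (nfaces_witness sg a) (nfaces_witness sH xH.1) -cV -cE.
exact: genus_del_shift_le.
Qed.

End BetaVertex.

Theorem theorem2p1 (V E : finType) (ends : E -> V * V) (v v' : V) (a b : E) :
  connected_graph ends ->
  (forall x : V, 3 <= degree ends x) ->
  v != v' ->
  a != b ->
  edge_between ends a v v' ->
  edge_between ends b v v' ->
  (forall e : E, edge_between ends e v v' -> e = a \/ e = b) ->
  degree ends v = 3 ->
  degree ends v' = 3 ->
  (exists2 e : E, (e != a) && (e != b) &
     [exists w : V, (w != v) && (w != v') && edge_between ends e v w]) ->
  (exists2 e : E, (e != a) && (e != b) &
     [exists w : V, (w != v) && (w != v') && edge_between ends e v' w]) ->
  connected_graph (del_ends ends v) ->
  max_genus (del_ends ends v) + 1 = max_genus ends.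
Proof.
move=> _ deg3 nvv nab ea eb _ deg_v deg_v'
  [c /andP[nca ncb] /existsP[u /andP[/andP[nuv nuv'] ec]]]
  [d /andP[nda ndb] /existsP[w /andP[_ ed]]] connH.
exact: (max_genus_del_beta nvv nuv nuv' nab nca ncb nda ndb ea eb ec ed deg_v deg_v'
          (leq_trans _ (deg3 u)) connH).
Qed.
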